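(* Suppose $\mathcal{F}=\{X;f_\lambda\mid\lambda\in\Lambda\}$ is a minimal IFS on an infinite compact metric space $X$ and $\mathcal{F}$ has some non-periodic regularly recurrent point. If $l,n\in NM(\mathcal{F})$ and $l$ is a multiple of $n$, then $C_l$ refines $C_n$ (every element of $C_l$ is contained in some element of $C_n$).
   Context: $\Lambda$ is a finite nonempty set, $f_\lambda:X\to X$ continuous. $\Lambda^{\mathbb{Z}_+}$ is the set of sequences $\sigma=(\lambda_1,\lambda_2,\dots)$ in $\Lambda$, $\mathcal{F}_{\sigma_n}=f_{\lambda_n}\circ\cdots\circ f_{\lambda_1}$, $\mathcal{F}_{\sigma_0}=\mathrm{id}$. A nonempty closed $M\subseteq X$ is $\mathcal{F}^n$-minimal if $\mathcal{F}_{\sigma_n}(M)=M$ for all $\sigma$ and $\mathcal{F}_{\sigma_n}(A)\ne A$ for every nonempty proper $A\subsetneq M$ and every $\sigma$. $\mathcal{F}$ is minimal if the only $\mathcal{F}^1$-minimal set is $X$. $NM(\mathcal{F})$ is the set of positive integers $i$ such that some subset $M\subseteq X$ is $\mathcal{F}^i$-minimal but not $\mathcal{F}^j$-minimal for $j=1,\dots,i-1$. For $n\in NM(\mathcal{F})$, $C_n$ denotes the (unique) cover of $X$ consisting of $n$ pairwise disjoint $\mathcal{F}^n$-minimal sets. A point $x$ is regularly recurrent if for every neighborhood $U$ of $x$ there is $n\ge1$ with $\mathcal{F}_{\sigma_{ni}}(x)\in U$ for all $i\ge0$ and all $\sigma$. A point is periodic if some finite composition $f_{\lambda_n}\circ\cdots\circ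 f_{\lambda_1}$ fixes it. *)

From Stdlib Require Import Reals List.
Open Scope R_scope.

Definition set_eq {T : Type} (A B : T -> Prop) : Prop := forall x, A x <-> B x.
Definition subset {T : Type} (A B : T -> Prop) : Prop := forall x, A x -> B x.
Definition image {T : Type} (f : T -> T) (A : T -> Prop) : T -> Prop :=
  fun y => exists x, A x /\ f x = y.

Section Metric.
Variable X : Metric_Space.

Definition ball (x : Base X) (e : R) : Base X -> Prop := fun y => dist X x y < e.

Definition is_open (U : Base X -> Prop) : Prop :=
  forall x, U x -> exists e, e > 0 /\ subset (ball x e) U.

Definition is_closed (A : Base X -> Prop) : Prop := is_open (fun x => ~ A x).

Definition neighborhood (U : Base X -> Prop) (x : Base X) : Prop :=
  exists e, e > 0 /\ subset (ball x e) U.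

Definition compact_space : Prop :=
  forall (I : Type) (U : I -> Base X -> Prop),
    (forall i, is_open (U i)) -> (forall x, exists i, U i x) ->
    exists l : list I, forall x, exists i, In i l /\ U i x.

Definition infinite_space : Prop :=
  ~ exists l : list (Base X), forall x, In x l.

Definition continuous_map (f : Base X -> Base X) : Prop :=
  forall x e, e > 0 -> exists d, d > 0 /\
    forall y, dist X x y < d -> dist X (f x) (f y) < e.

(* IFS with maps f : Lam -> X -> X; a sequence sigma = (lambda_1, lambda_2, ...)
   is encoded as sigma : nat -> Lam with sigma k = lambda_{k+1}. *)
Variable Lam : Type.
Variable f : Lam -> Base X -> Base X.

Fixpoint comp (sigma : nat -> Lam) (n : nat) : Base X -> Base X :=
  match n with
  | O => fun x => x
  | S k => fun x => f (sigma k) (comp sigma k x)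
  end.

Definition nminimal (n : nat) (M : Base X -> Prop) : Prop :=
  (exists x, M x) /\ is_closed M /\
  (forall sigma, set_eq (image (comp sigma n) M) M) /\
  (forall A : Base X -> Prop,
     (exists x, A x) -> is_closed A -> subset A M -> ~ set_eq A M ->
     forall sigma, ~ set_eq (image (comp sigma n) A) A).

Definition minimal_IFS : Prop :=
  forall M, nminimal 1 M <-> (forall x, M x).

Definition in_NM (i : nat) : Prop :=
  (i >= 1)%nat /\
  exists M, nminimal i M /\ forall j, (1 <= j)%nat -> (j <= i - 1)%nat -> ~ nminimal j M.

Definition minimal_cover (n : nat) (C : nat -> Base X -> Prop) : Prop :=
  (forall i, (i < n)%nat -> nminimal n (C i)) /\
  (forall i j, (i < n)%nat -> (j < n)%nat -> i <> j ->
     forall x, C i x -> C j x -> False) /\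
  (forall x, exists i, (i < n)%nat /\ C i x).

Definition regularly_recurrent (x : Base X) : Prop :=
  forall U, neighborhood U x ->
    exists n, (n >= 1)%nat /\ forall i sigma, U (comp sigma (n * i) x).

Definition periodic (x : Base X) : Prop :=
  exists sigma n, (n >= 1)%nat /\ comp sigma n x = x.

End Metric.

(* An element M of C_l is F^l-minimal, and every element C of C_n is invariant
   under all compositions of length l, a multiple of n, in both directions:
   forward because C is F^n-minimal, backward because the elements of C_n are
   disjoint and cover X.  So M /\ C is a nonempty closed subset of M mapped onto
   itself by a composition of length l, and minimality of M forces M = M /\ C. *)
From Pilot Require Import Defs.
From Stdlib Require Import Reals List Classical Lia.

Lemma closed_and (X : Metric_Space) (A B : Base X -> Prop) :
  is_closed X A -> is_closed X B -> is_closed X (fun x => A x /\ B x).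
Proof.
  intros HA HB x Hx.
  destruct (classic (A x)) as [Ax | nAx].
  - assert (nBx : ~ B x) by tauto.
    destruct (HB x nBx) as [e [He Hball]].
    exists e; split; [exact He |].
    intros y Hy [_ By]; exact (Hball y Hy By).
  - destruct (HA x nAx) as [e [He Hball]].
    exists e; split; [exact He |].
    intros y Hy [Ay _]; exact (Hball y Hy Ay).
Qed.

Section Compositions.

Variables (X : Metric_Space) (Lam : Type) (f : Lam -> Base X -> Base X).

Local Notation comp := (Defs.comp X Lam f).
Local Notation nminimal := (Defs.nminimal X Lam f).

Lemma comp_add (sigma : nat -> Lam) (a b : nat) (x : Base X) :
  comp sigma (a + b) x = comp (fun k => sigma (a + k)%nat) b (comp sigma a x).
Proof.
  induction b as [| b IH]; simpl.
  - now rewrite Nat.add_0_r.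
  - now rewrite Nat.add_succ_r; simpl; rewrite IH.
Qed.

Lemma nminimal_comp_mul (n : nat) (M : Base X -> Prop) :
  nminimal n M ->
  forall m sigma x, M x -> M (comp sigma (m * n) x).
Proof.
  intros [_ [_ [Himage _]]] m.
  induction m as [| m IH]; intros sigma x Hx; simpl; [exact Hx |].
  replace (n + m * n)%nat with (m * n + n)%nat by lia.
  rewrite comp_add.
  apply (proj1 (Himage (fun q => sigma (m * n + q)%nat) _)).
  exists (comp sigma (m * n) x); split; [apply IH, Hx | reflexivity].
Qed.

Lemma minimal_cover_comp_mul (n : nat) (C : nat -> Base X -> Prop) :
  minimal_cover X Lam f n C ->
  forall j m sigma x, (j < n)%nat -> (C j x <-> C j (comp sigma (m * n) x)).
Proof.
  intros [Hmin [Hdisj Hcov]] j m sigma x Hj; split.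
  - apply (nminimal_comp_mul n); auto.
  - intros Hjy.
    destruct (Hcov x) as [j' [Hj' Hj'x]].
    destruct (Nat.eq_dec j' j) as [<- | Hne]; [exact Hj'x |].
    exfalso; apply (Hdisj j' j Hj' Hj Hne (comp sigma (m * n) x)); [| exact Hjy].
    apply (nminimal_comp_mul n); auto.
Qed.

Lemma nminimal_sub_invariant (l : nat) (M B : Base X -> Prop) (sigma : nat -> Lam) :
  nminimal l M -> is_closed X B -> (exists x, M x /\ B x) ->
  (forall x, M x -> (B x <-> B (comp sigma l x))) ->
  subset M B.
Proof.
  intros [_ [HclM [Himage Hmin]]] HclB [x0 Hx0] HBinv.
  set (A := fun x => M x /\ B x).
  assert (HAinv : set_eq (image (comp sigma l) A) A).
  { intro y; split.
    - intros [x [[HMx HBx] <-]]; split.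
      + apply (proj1 (Himage sigma _)); exists x; auto.
      + exact (proj1 (HBinv x HMx) HBx).
    - intros [HMy HBy].
      destruct (proj2 (Himage sigma y) HMy) as [x [HMx <-]].
      exists x; split; [split; [exact HMx | exact (proj2 (HBinv x HMx) HBy)] | reflexivity]. }
  destruct (classic (set_eq A M)) as [HAM | HAM].
  - intros x Hx; exact (proj2 (proj2 (HAM x) Hx)).
  - exfalso.
    apply (Hmin A (ex_intro _ x0 Hx0) (closed_and X M B HclM HclB)
             (fun x Hx => proj1 Hx) HAM sigma HAinv).
Qed.

End Compositions.

Theorem lemma4p3
  (X : Metric_Space) (Lam : Type) (f : Lam -> Base X -> Base X)
  (HLfin : exists l : list Lam, forall a, In a l)
  (HLne : inhabited Lam)
  (Hcont : forall a, continuous_map X (f a))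
  (Hcpt : compact_space X)
  (Hinf : infinite_space X)
  (Hmin : minimal_IFS X Lam f)
  (Hrr : exists x, regularly_recurrent X Lam f x /\ ~ periodic X Lam f x)
  (l n : nat)
  (Hl : in_NM X Lam f l) (Hn : in_NM X Lam f n)
  (Hdiv : exists k, l = (k * n)%nat)
  (Cl Cn : nat -> Base X -> Prop)
  (HCl : minimal_cover X Lam f l Cl) (HCn : minimal_cover X Lam f n Cn) :
  forall i, (i < l)%nat -> exists j, (j < n)%nat /\ subset (Cl i) (Cn j).
Proof.
  intros i Hi.
  destruct Hdiv as [k ->], HLne as [a].
  assert (HMi : nminimal X Lam f (k * n) (Cl i)) by exact (proj1 HCl i Hi).
  destruct (proj1 HMi) as [x0 Hx0].
  destruct (proj2 (proj2 HCn) x0) as [j [Hj Hx0j]].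
  exists j; split; [exact Hj |].
  apply (nminimal_sub_invariant X Lam f (k * n) _ _ (fun _ => a) HMi).
  - exact (proj1 (proj2 (proj1 HCn j Hj))).
  - exists x0; auto.
  - intros x _; exact (minimal_cover_comp_mul X Lam f n Cn HCn j k _ x Hj).
Qed.
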